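(* Under the standing assumptions, $\sum_{n\eta_1\le S\le n\eta_2}\Phi(S)=o(1)$ as $n\to\infty$, the sum being over integers $S$.
   Context: Parameters: integer $k\ge2$, constants $\alpha>0$, $r>0$, $0<p<1$; $d=n^{\alpha}$ (treated as an integer), $m=n\ln d$, $\tau=\frac1{1-p}$, $r_{cr}=\frac1{\ln\tau}$. Standing assumptions: $(2k-1)\alpha>1$, $k\alpha\le1$, $k\ge\frac{\tau\ln\tau}{\tau-1}$, and $r<r_{cr}$. Notation: $f(s)=1+\frac{p}{1-p}\cdot\frac{s^k-d^{-k}}{1-d^{-k}}$ for $s\in[0,1]$; $B(S)=\binom{n}{S}\left(\frac1d\right)^{S}\left(1-\frac1d\right)^{n-S}$; $W(S)=f(S/n)^{rm}$; $\Phi(S)=B(S)W(S)$. Let $\lambda>0$ be a fixed constant and $\eta_1=\frac1d+\frac{\lambda}{n^{1-(k-1)\alpha}\ln d}$. Let $\alpha_0=\frac{(2k-1)\alpha-1}{2(k-1)}$, and let $\eta_2,\eta_3,\mu$ be constants with $0<\eta_2<\eta_3<1$, $\alpha_0/\alpha-\mu\eta_2^{k-1}>0$, $\mu>\frac{kpr}{1-p}$, and $r\ln(1-p)+\eta_3>0$. *)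

From Stdlib Require Import Reals.
Open Scope R_scope.

(* d = n^alpha (the real value; "treated as an integer" = rounding ignored) *)
Definition dd (alpha : R) (n : nat) : R := Rpower (INR n) alpha.
Definition mm (alpha : R) (n : nat) : R := INR n * ln (dd alpha n).
Definition tau (p : R) : R := 1 / (1 - p).
Definition r_cr (p : R) : R := 1 / ln (tau p).

Definition ff (p : R) (k : nat) (d s : R) : R :=
  1 + p / (1 - p) * ((s ^ k - (/ d) ^ k) / (1 - (/ d) ^ k)).

Definition BB (n : nat) (d : R) (S : nat) : R :=
  Binomial.C n S * (/ d) ^ S * (1 - / d) ^ (n - S).

Definition WW (alpha r p : R) (k n S : nat) : R :=
  Rpower (ff p k (dd alpha n) (INR S / INR n)) (r * mm alpha n).

Definition Phi (alpha r p : R) (k n S : nat) : R :=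
  BB n (dd alpha n) S * WW alpha r p k n S.

Definition eta1 (alpha lam : R) (k n : nat) : R :=
  / dd alpha n + lam / (Rpower (INR n) (1 - (INR k - 1) * alpha) * ln (dd alpha n)).

Definition alpha0 (alpha : R) (k : nat) : R :=
  ((2 * INR k - 1) * alpha - 1) / (2 * (INR k - 1)).

(* sum over integers S with n*eta1 <= S <= n*eta2 of Phi(S);
   since eta2 < 1, such S lie in 0..n *)
Definition sum_Phi (alpha r p lam eta2 : R) (k n : nat) : R :=
  sum_f_R0 (fun S =>
    if Rle_dec (INR n * eta1 alpha lam k n) (INR S) then
      if Rle_dec (INR S) (INR n * eta2) then Phi alpha r p k n S else 0
    else 0) n.

(* Write L = ln n, so that 1/d = n^-alpha and the binomial mean is
   mu0 = n/d = n^(1-alpha).  We show that for n large EVERY term of the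
   window is at most n^-2; since there are at most n + 1 terms, the sum is
   O(1/n).  A term is bounded by exp of
       S ln (mu0 / S) + (S - mu0) + r m (f(S/n) - 1),
   combining a Chernoff bound for B(S) with ln f <= f - 1 for W(S).
   - Moderate deviations, S < mu0 n^alpha0: (S/n)^(k-1) <= n^-((1-alpha)/2),
     so the weight term is linear in t = S - mu0 with a small slope, and the
     refined Chernoff exponent -t^2/(2 mu0 + t) wins since the window starts
     at t >= t0 = lam n^((k-1) alpha) / (alpha ln n).
   - Large deviations, S >= mu0 n^alpha0: the binomial costs n^(-alpha0 S),
     the weight gains at most n^(mu alpha eta2^(k-1) S), and the hypothesis
     alpha0/alpha > mu eta2^(k-1) leaves a net rate c0 > 0.
   The file first proves the elementary real inequalities and the binomial
   Chernoff bound, then the per-term bound (section [OneTerm]), the fact that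
   the needed largeness conditions on ln n hold eventually, and finally the
   theorem by a squeeze. *)
From Stdlib Require Import Reals Lra Psatz.
From Coquelicot Require Import Coquelicot.
Open Scope R_scope.

Lemma exp_le_mono (x y : R) : x <= y -> exp x <= exp y.
Proof. intros [Hlt | ->]; [left; apply exp_increasing; exact Hlt | lra]. Qed.

Lemma exp_pow (a : R) (m : nat) : exp a ^ m = exp (INR m * a).
Proof.
  induction m as [|m IH]; [simpl; rewrite Rmult_0_l, exp_0; reflexivity|].
  rewrite S_INR; simpl; rewrite IH, <- exp_plus; f_equal; ring.
Qed.

Lemma ln_le_sub1 (x : R) : 0 < x -> ln x <= x - 1.
Proof.
  intros Hx. rewrite <- (ln_exp (x - 1)). apply ln_le; [exact Hx|].
  pose proof (exp_ineq1_le (x - 1)). lra.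
Qed.

(* The Pade-type lower bound [ln (1 + x) >= 2x / (2 + x)] for [x >= 0],
   proved by the mean value theorem: the difference vanishes at 0 and has
   derivative [x^2 / ((1 + x) (2 + x)^2) >= 0]. *)
Lemma ln_1p_ge (x : R) : 0 <= x -> 2 * x / (2 + x) <= ln (1 + x).
Proof.
  intros Hx.
  set (F := fun y => ln (1 + y) - 2 * y / (2 + y)).
  set (F' := fun y => y ^ 2 / ((1 + y) * (2 + y) ^ 2)).
  destruct (Req_dec x 0) as [->|Hx0].
  { replace (1 + 0) with 1 by ring. rewrite ln_1. unfold Rdiv. lra. }
  assert (HF : forall y, 0 <= y -> y <= x -> derivable_pt_lim F y (F' y)).
  { intros y Hy _. apply is_derive_Reals. unfold F, F'.
    auto_derive; [repeat split; lra|]. field. lra. }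
  destruct (MVT_cor3 F F' 0 x ltac:(lra) HF) as [c [Hc0 [Hcx Hc]]].
  assert (HF0 : F 0 = 0) by (unfold F; replace (1 + 0) with 1 by ring; rewrite ln_1; field).
  assert (HF'c : 0 <= F' c * (x - 0)).
  { unfold F'. apply Rmult_le_pos; [|lra]. apply Rdiv_le_0_compat; [nra|].
    apply Rmult_lt_0_compat; [lra | apply pow_lt; lra]. }
  unfold F in Hc, HF0. lra.
Qed.

Lemma pow_sub_le (q s : R) (k : nat) :
  0 <= q <= s -> s ^ S k - q ^ S k <= INR (S k) * s ^ k * (s - q).
Proof.
  intros Hqs. induction k as [|k IH]; [simpl; lra|].
  assert (Hqk : q ^ S k <= s ^ S k) by (apply pow_incr; lra).
  assert (Hstep : s ^ S (S k) - q ^ S (S k)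
                  = s * (s ^ S k - q ^ S k) + q ^ S k * (s - q)) by (simpl; ring).
  rewrite Hstep, (S_INR (S k)).
  assert (H1 : s * (s ^ S k - q ^ S k) <= s * (INR (S k) * s ^ k * (s - q)))
    by (apply Rmult_le_compat_l; lra).
  assert (H2 : q ^ S k * (s - q) <= s ^ S k * (s - q))
    by (apply Rmult_le_compat_r; lra).
  replace (s * (INR (S k) * s ^ k * (s - q))) with (INR (S k) * s ^ S k * (s - q))
    in H1 by (simpl; ring).
  lra.
Qed.

Lemma sum_f_R0_ge_term (u : nat -> R) (n i : nat) :
  (forall j, 0 <= u j) -> (i <= n)%nat -> u i <= sum_f_R0 u n.
Proof.
  intros Hu Hi. induction n as [|n IH].
  - replace i with 0%nat by lia. simpl. lra.
  - simpl. destruct (Nat.eq_dec i (S n)) as [->|Hne].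
    + pose proof (cond_pos_sum u n Hu). lra.
    + specialize (IH ltac:(lia)). specialize (Hu (S n)). lra.
Qed.

Lemma binomial_coef_nonneg (n S : nat) : 0 <= Binomial.C n S.
Proof.
  unfold Binomial.C, Rdiv. apply Rmult_le_pos; [apply pos_INR|].
  apply Rlt_le, Rinv_0_lt_compat, Rmult_lt_0_compat; apply INR_fact_lt_0.
Qed.

Lemma binomial_term_nonneg (n S : nat) (s : R) :
  0 <= s <= 1 -> 0 <= Binomial.C n S * s ^ S * (1 - s) ^ (n - S).
Proof.
  intros Hs. apply Rmult_le_pos; [apply Rmult_le_pos|];
    [apply binomial_coef_nonneg | apply pow_le; lra | apply pow_le; lra].
Qed.

(* A binomial probability is at most 1: it is one term of [(s + (1 - s))^n]. *)
Lemma binomial_term_le_1 (n S : nat) (s : R) :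
  (S <= n)%nat -> 0 <= s <= 1 -> Binomial.C n S * s ^ S * (1 - s) ^ (n - S) <= 1.
Proof.
  intros HS Hs.
  replace 1 with ((s + (1 - s)) ^ n) at 2 by (replace (s + (1 - s)) with 1 by ring; apply pow1).
  rewrite binomial.
  apply (sum_f_R0_ge_term (fun i => Binomial.C n i * s ^ i * (1 - s) ^ (n - i))); [|exact HS].
  intros j. apply binomial_term_nonneg. exact Hs.
Qed.

(* Chernoff bound for the upper tail of Bin(n, q): writing the point mass at
   [S] as the Bin(n, S/n) point mass (at most 1) times the likelihood ratio,
   and bounding [((1 - q)/(1 - S/n))^(n - S) <= exp (S - n q)], gives
   [P(Bin(n,q) = S) <= exp (S ln (n q / S) + S - n q)]. *)
Lemma binomial_chernoff (n S : nat) (q : R) :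
  (S <= n)%nat -> 0 < INR n -> 0 < q -> q < INR S / INR n -> INR S / INR n < 1 ->
  Binomial.C n S * q ^ S * (1 - q) ^ (n - S)
  <= exp (INR S * ln (INR n * q / INR S) + (INR S - INR n * q)).
Proof.
  intros HSn Hn Hq Hqs Hs1. set (s := INR S / INR n) in *.
  assert (HS : 0 < INR S) by (unfold s in Hqs; apply (Rmult_lt_compat_r (INR n)) in Hqs;
    [unfold Rdiv in Hqs; rewrite Rmult_assoc, Rinv_l in Hqs; nra | lra]).
  assert (Hnm : INR n - INR S = INR n * (1 - s)) by (unfold s; field; lra).
  set (A := (q / s) ^ S). set (B := ((1 - q) / (1 - s)) ^ (n - S)).
  assert (Hsplit : Binomial.C n S * q ^ S * (1 - q) ^ (n - S)
                   = (Binomial.C n S * s ^ S * (1 - s) ^ (n - S)) * (A * B)).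
  { unfold A, B, Rdiv. rewrite !Rpow_mult_distr, !pow_inv.
    field. split; apply pow_nonzero; lra. }
  assert (HA : A = exp (INR S * ln (INR n * q / INR S))).
  { unfold A. rewrite <- Rpower_pow by (apply Rdiv_lt_0_compat; lra).
    unfold Rpower. do 3 f_equal. unfold s. field. lra. }
  assert (HB : B <= exp (INR S - INR n * q)).
  { apply Rle_trans with (exp ((s - q) / (1 - s)) ^ (n - S)).
    - apply pow_incr. split; [apply Rlt_le, Rdiv_lt_0_compat; lra|].
      replace ((1 - q) / (1 - s)) with (1 + (s - q) / (1 - s)) by (field; lra).
      apply exp_ineq1_le.
    - rewrite exp_pow, minus_INR by exact HSn. right. f_equal.
      rewrite Hnm.
      replace (INR n * (1 - s) * ((s - q) / (1 - s))) with (INR n * s - INR n * q)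
        by (field; lra).
      unfold s. field. lra. }
  assert (HA0 : 0 <= A) by (apply pow_le, Rlt_le, Rdiv_lt_0_compat; lra).
  assert (HB0 : 0 <= B) by (apply pow_le, Rlt_le, Rdiv_lt_0_compat; lra).
  pose proof (binomial_term_le_1 n S s HSn ltac:(lra)) as Hle1.
  pose proof (binomial_term_nonneg n S s ltac:(lra)) as Hge0.
  rewrite Hsplit, exp_plus, <- HA.
  apply Rle_trans with (1 * (A * B)); [apply Rmult_le_compat_r; nra|].
  rewrite Rmult_1_l. apply Rmult_le_compat_l; lra.
Qed.

Lemma chernoff_exponent_le (mu0 t : R) :
  0 < mu0 -> 0 <= t ->
  (mu0 + t) * ln (mu0 / (mu0 + t)) + t <= - (t ^ 2 / (2 * mu0 + t)).
Proof.
  intros Hmu0 Ht.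
  assert (Hx : 0 <= t / mu0) by (apply Rdiv_le_0_compat; lra).
  pose proof (ln_1p_ge (t / mu0) Hx) as Hln.
  replace (mu0 / (mu0 + t)) with (/ (1 + t / mu0)) by (field; lra).
  rewrite ln_Rinv by (apply Rplus_lt_le_0_compat; lra).
  replace (2 * (t / mu0) / (2 + t / mu0)) with (2 * t / (2 * mu0 + t)) in Hln by (field; lra).
  assert (Hid : (mu0 + t) * (2 * t / (2 * mu0 + t)) = t + t ^ 2 / (2 * mu0 + t)) by (field; lra).
  assert (Hmono : (mu0 + t) * (2 * t / (2 * mu0 + t)) <= (mu0 + t) * ln (1 + t / mu0))
    by (apply Rmult_le_compat_l; lra).
  lra.
Qed.

Lemma moderate_deviation_exponent (mu0 t0 t a b : R) :
  0 < t0 -> t0 <= t -> t0 <= mu0 ->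
  2 * a <= t0 / (3 * mu0) -> 2 * b <= t0 ^ 2 / (6 * mu0) ->
  (mu0 + t) * ln (mu0 / (mu0 + t)) + t + a * t <= - (2 * b).
Proof.
  intros Ht0 Ht Hmu0 Ha Hb.
  pose proof (chernoff_exponent_le mu0 t ltac:(lra) ltac:(lra)) as Hch.
  (* the ratio [t / (2 mu0 + t)] increases in [t], and is [>= t0 / (3 mu0)] *)
  assert (Hratio : t0 / (3 * mu0) <= t / (2 * mu0 + t)).
  { apply Rmult_le_reg_r with (3 * mu0 * (2 * mu0 + t)); [nra|].
    replace (t0 / (3 * mu0) * (3 * mu0 * (2 * mu0 + t))) with (t0 * (2 * mu0 + t)) by (field; lra).
    replace (t / (2 * mu0 + t) * (3 * mu0 * (2 * mu0 + t))) with (3 * mu0 * t) by (field; lra).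
    nra. }
  set (e := t0 / (6 * mu0)).
  assert (He : t0 / (3 * mu0) = 2 * e) by (unfold e; field; lra).
  assert (He0 : 0 < e) by (apply Rdiv_lt_0_compat; lra).
  (* hence the net exponent is at most [- t e <= - t0 e <= - 2 b] *)
  assert (Hgain : t * e <= t * (t / (2 * mu0 + t)) - a * t).
  { replace (t * (t / (2 * mu0 + t)) - a * t) with (t * (t / (2 * mu0 + t) - a)) by ring.
    apply Rmult_le_compat_l; lra. }
  replace (t ^ 2 / (2 * mu0 + t)) with (t * (t / (2 * mu0 + t))) in Hch by (field; lra).
  replace (t0 ^ 2 / (6 * mu0)) with (t0 * e) in Hb by (unfold e; field; lra).
  assert (t0 * e <= t * e) by (apply Rmult_le_compat_r; lra).
  lra.
Qed.

Lemma ff_excess_bounds (p : R) (k : nat) (d s : R) :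
  0 < p < 1 -> (1 <= k)%nat -> 0 < / d -> / d <= s -> / d <= / 2 ->
  0 <= ff p k d s - 1 <= 2 * (p / (1 - p)) * (s ^ k - (/ d) ^ k).
Proof.
  intros Hp Hk Hq Hqs Hq2.
  assert (Hqk : (/ d) ^ k <= s ^ k) by (apply pow_incr; lra).
  assert (Hqk0 : 0 < (/ d) ^ k) by (apply pow_lt; lra).
  assert (Hqk1 : (/ d) ^ k <= / d).
  { destruct k as [|k]; [lia|]. simpl.
    assert ((/ d) ^ k <= 1) by (rewrite <- (pow1 k); apply pow_incr; lra). nra. }
  assert (Hpp : 0 < p / (1 - p)) by (apply Rdiv_lt_0_compat; lra).
  assert (Hfrac : 0 <= (s ^ k - (/ d) ^ k) / (1 - (/ d) ^ k) <= 2 * (s ^ k - (/ d) ^ k)).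
  { split; [apply Rdiv_le_0_compat; lra|].
    apply Rmult_le_reg_r with (1 - (/ d) ^ k); [lra|].
    unfold Rdiv. rewrite Rmult_assoc, Rinv_l by lra. nra. }
  unfold ff. split; nra.
Qed.

Lemma WW_le_exp_excess (alpha r p : R) (k n S : nat) :
  0 <= r * mm alpha n -> 1 <= ff p k (dd alpha n) (INR S / INR n) ->
  WW alpha r p k n S <= exp (r * mm alpha n * (ff p k (dd alpha n) (INR S / INR n) - 1)).
Proof.
  intros Hrm Hf. unfold WW, Rpower. apply exp_le_mono.
  apply Rmult_le_compat_l; [exact Hrm|].
  apply ln_le_sub1. lra.
Qed.

Lemma Phi_nonneg (alpha r p : R) (k n S : nat) :
  1 <= dd alpha n -> 0 <= Phi alpha r p k n S.
Proof.
  intros Hd. unfold Phi, BB, WW, Rpower.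
  apply Rmult_le_pos; [|left; apply exp_pos].
  apply binomial_term_nonneg. split.
  - left. apply Rinv_0_lt_compat. lra.
  - rewrite <- Rinv_1. apply Rinv_le_contravar; lra.
Qed.

Lemma eventually_linear_ge (a c : R) :
  0 < a -> Rbar_locally p_infty (fun L => c <= a * L).
Proof.
  intros Ha. exists (c / a). intros L HL.
  apply Rmult_lt_compat_l with (r := a) in HL; [|exact Ha].
  replace (a * (c / a)) with c in HL by (field; lra). lra.
Qed.

(* Exponential growth eventually dominates any cubic: [exp x >= (x/4)^4]. *)
Lemma eventually_cubic_le_exp (g C : R) :
  0 < g -> Rbar_locally p_infty (fun L => C * L ^ 3 <= exp (g * L)).
Proof.
  intros Hg. set (b := (4 / g) ^ 4).
  assert (Hb : 0 < b) by (apply pow_lt, Rdiv_lt_0_compat; lra).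
  exists (1 + Rabs C * b). intros L HL.
  assert (HCb : 0 <= Rabs C * b) by (apply Rmult_le_pos; [apply Rabs_pos | lra]).
  assert (HL1 : 1 <= L) by lra.
  assert (Hquartic : (g * L / 4) ^ 4 <= exp (g * L)).
  { replace (exp (g * L)) with (exp (g * L / 4) ^ 4) by (rewrite exp_pow; f_equal; simpl; field).
    apply pow_incr. split; [apply Rmult_le_pos; [apply Rmult_le_pos|]; lra|].
    apply (Rle_trans _ (1 + g * L / 4)); [lra | apply exp_ineq1_le]. }
  eapply Rle_trans; [|exact Hquartic].
  replace ((g * L / 4) ^ 4) with (L ^ 3 * (L / b)) by (unfold b; field; lra).
  rewrite Rmult_comm. apply Rmult_le_compat_l; [apply pow_le; lra|].
  apply Rle_trans with (Rabs C); [apply RRle_abs|].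
  apply Rmult_le_reg_r with b; [exact Hb|].
  replace (L / b * b) with L by (field; lra). lra.
Qed.

Section Asymptotics.
Variables (k : nat) (alpha r p lam eta2 mu : R).
Hypotheses (Hk : (2 <= k)%nat) (Ha : 0 < alpha) (Hka : INR k * alpha <= 1)
  (Hr : 0 < r) (Hp : 0 < p) (Hp1 : p < 1) (Hlam : 0 < lam)
  (He2 : 0 < eta2) (He21 : eta2 < 1) (Hmu : mu > INR k * p * r / (1 - p)).

(* [c0] is the decay rate (in units of [S ln n]) of the large-deviation
   regime; [K] and [g] govern the moderate-deviation regime. *)
Let c0 := alpha0 alpha k - alpha * mu * eta2 ^ (k - 1).
Let K := 2 * r * alpha * p * INR k / (1 - p).
Let g := (INR k - 1) * alpha - (1 - alpha) / 2.

Section OneTerm.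
Variables (n j : nat).
Let L := ln (INR n).
Hypotheses (Hn : 0 < INR n) (Hjn : (j <= n)%nat)
  (HL1 : 1 <= alpha * L) (HL2 : lam <= alpha * L) (HL3 : 2 <= c0 * L)
  (HL4 : 4 <= c0 * exp ((1 - alpha) * L))
  (HL5 : 6 * K * alpha * L ^ 2 <= lam * exp (g * L))
  (HL6 : 12 * alpha ^ 2 * L ^ 3 <= (lam * exp (g * L)) ^ 2)
  (Hj1 : INR n * eta1 alpha lam k n <= INR j) (Hj2 : INR j <= INR n * eta2).

(* In terms of [L = ln n]: [1/d = q = n^-alpha], the mean [mu0 = n q] of
   Bin(n, 1/d), its square root [h], the lower end [mu0 + t0] of the window,
   the density [s = j/n] and the excess [r m (f(s) - 1)] of the weight. *)
Let q := / dd alpha n.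
Let mu0 := exp ((1 - alpha) * L).
Let h := exp ((1 - alpha) / 2 * L).
Let t0 := lam * (exp (g * L) * h) / (alpha * L).
Let s := INR j / INR n.
Let excess := r * mm alpha n * (ff p k (dd alpha n) s - 1).

Lemma L_pos : 0 < L.
Proof. nra. Qed.

Lemma k_ge_2 : 2 <= INR k.
Proof. replace 2 with (INR 2) by (simpl; ring). apply le_INR. exact Hk. Qed.

Lemma n_exp : INR n = exp L.
Proof. unfold L. rewrite exp_ln; [reflexivity | exact Hn]. Qed.

Lemma dd_exp : dd alpha n = exp (alpha * L).
Proof. reflexivity. Qed.

Lemma q_le_half : 0 < q <= / 2.
Proof.
  unfold q. rewrite dd_exp. split; [apply Rinv_0_lt_compat, exp_pos|].
  apply Rinv_le_contravar; [lra|]. pose proof (exp_ineq1_le (alpha * L)). lra.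
Qed.

Lemma mean_eq : INR n * q = mu0.
Proof.
  unfold q, mu0. rewrite dd_exp, n_exp, <- exp_Ropp, <- exp_plus. f_equal. ring.
Qed.

Lemma mean_sq : mu0 = h * h.
Proof. unfold mu0, h. rewrite <- exp_plus. f_equal. field. Qed.

Lemma mm_eq : mm alpha n = INR n * (alpha * L).
Proof. unfold mm. rewrite dd_exp, ln_exp. reflexivity. Qed.

Lemma window_start : INR n * eta1 alpha lam k n = mu0 + t0.
Proof.
  pose proof L_pos as HL.
  unfold eta1. fold q. rewrite <- mean_eq. unfold t0, Rpower. fold L.
  rewrite dd_exp, ln_exp, n_exp.
  assert (E : exp L = exp ((1 - (INR k - 1) * alpha) * L) * (exp (g * L) * h)).
  { unfold h. rewrite <- !exp_plus. f_equal. unfold g. ring. }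
  rewrite E. field. repeat split; try lra. apply Rgt_not_eq, exp_pos.
Qed.

Lemma t0_bounds : 0 < t0 <= mu0.
Proof.
  pose proof L_pos as HL. pose proof (exp_pos (g * L)) as HE. pose proof (exp_pos ((1 - alpha) / 2 * L)) as Hh.
  fold h in Hh. unfold t0. split.
  - apply Rdiv_lt_0_compat; [apply Rmult_lt_0_compat; [lra | nra] | nra].
  - rewrite mean_sq. apply Rmult_le_reg_r with (alpha * L); [nra|].
    replace (lam * (exp (g * L) * h) / (alpha * L) * (alpha * L)) with (lam * exp (g * L) * h)
      by (field; nra).
    assert (Hgh : exp (g * L) <= h).
    { unfold h. apply exp_le_mono, Rmult_le_compat_r; [lra|]. unfold g. lra. }
    assert (lam * exp (g * L) <= alpha * L * h) by (apply Rmult_le_compat; lra).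
    nra.
Qed.

Lemma density_bounds : 0 < INR j /\ q < s <= eta2.
Proof.
  pose proof window_start as Hw. pose proof t0_bounds. pose proof mean_eq.
  assert (Hmu0 : 0 < mu0) by apply exp_pos.
  assert (Hj : 0 < INR j) by lra.
  split; [exact Hj|]. unfold s. split.
  - apply Rmult_lt_reg_r with (INR n); [exact Hn|].
    unfold Rdiv. rewrite Rmult_assoc, Rinv_l, Rmult_1_r by lra. lra.
  - apply Rmult_le_reg_r with (INR n); [exact Hn|].
    unfold Rdiv. rewrite Rmult_assoc, Rinv_l, Rmult_1_r by lra. lra.
Qed.

Lemma Phi_le_exp_excess :
  Phi alpha r p k n j <= exp (INR j * ln (mu0 / INR j) + (INR j - mu0) + excess).
Proof.
  destruct density_bounds as [Hj [Hqs Hse]]. pose proof q_le_half as Hq.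
  assert (Hf := ff_excess_bounds p k (dd alpha n) s ltac:(lra) ltac:(lia)
                  ltac:(fold q; lra) ltac:(fold q; lra) ltac:(fold q; lra)).
  assert (Hrm : 0 <= r * mm alpha n) by (rewrite mm_eq; pose proof L_pos; apply Rmult_le_pos; nra).
  unfold Phi, BB. rewrite exp_plus. apply Rmult_le_compat.
  - apply binomial_term_nonneg. fold q. lra.
  - left. apply exp_pos.
  - rewrite <- mean_eq. apply binomial_chernoff; auto; fold q s; lra.
  - apply WW_le_exp_excess; [exact Hrm | fold s; lra].
Qed.

(* Below [mu0 n^alpha0] the density satisfies [s^(k-1) <= 1/h], so the
   weight excess is linear in the deviation with slope [K ln n / h]. *)
Lemma excess_moderate :
  INR j < mu0 * exp (alpha0 alpha k * L) -> excess <= K * L / h * (INR j - mu0).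
Proof.
  intros Hsmall. destruct density_bounds as [Hj [Hqs Hse]]. pose proof q_le_half as Hq.
  pose proof L_pos as HL. pose proof k_ge_2 as Hk2.
  assert (Hs : s < exp ((alpha0 alpha k - alpha) * L)).
  { unfold s. apply Rmult_lt_reg_r with (INR n); [exact Hn|].
    unfold Rdiv. rewrite Rmult_assoc, Rinv_l, Rmult_1_r by lra.
    replace (exp ((alpha0 alpha k - alpha) * L) * INR n) with (mu0 * exp (alpha0 alpha k * L)); [exact Hsmall|].
    unfold mu0. rewrite n_exp, <- !exp_plus. f_equal. ring. }
  assert (Hsk : s ^ (k - 1) <= / h).
  { apply Rle_trans with (exp ((alpha0 alpha k - alpha) * L) ^ (k - 1)); [apply pow_incr; lra|].
    rewrite exp_pow. unfold h. rewrite <- exp_Ropp. right. f_equal.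
    rewrite minus_INR by lia. unfold alpha0. simpl INR. field. lra. }
  assert (Hf := ff_excess_bounds p k (dd alpha n) s ltac:(lra) ltac:(lia)
                  ltac:(fold q; lra) ltac:(fold q; lra) ltac:(fold q; lra)).
  fold q in Hf.
  assert (Hdiff : s ^ k - q ^ k <= INR k * / h * (s - q)).
  { replace k with (Datatypes.S (k - 1)) by lia.
    eapply Rle_trans; [apply pow_sub_le; lra|]. replace (Datatypes.S (k - 1)) with k by lia.
    apply Rmult_le_compat_r; [lra|]. apply Rmult_le_compat_l; [lra | exact Hsk]. }
  assert (Hpp : 0 < p / (1 - p)) by (apply Rdiv_lt_0_compat; lra).
  assert (Hrm : 0 <= r * mm alpha n) by (rewrite mm_eq; apply Rmult_le_pos; nra).
  unfold excess. eapply Rle_trans.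
  { apply Rmult_le_compat_l; [exact Hrm|].
    apply Rle_trans with (2 * (p / (1 - p)) * (INR k * / h * (s - q))); [|apply Rle_refl].
    apply Rle_trans with (1 := proj2 Hf). apply Rmult_le_compat_l; lra. }
  right. rewrite mm_eq, <- mean_eq. unfold K, s. field.
  split; [lra|]. split; [apply Rgt_not_eq, exp_pos | lra].
Qed.

(* Below the window's upper end [s <= eta2], so [s^k <= s eta2^(k-1)] and
   the weight excess is at most [mu alpha eta2^(k-1) j ln n]. *)
Lemma excess_large : excess <= mu * alpha * L * eta2 ^ (k - 1) * INR j.
Proof.
  destruct density_bounds as [Hj [Hqs Hse]]. pose proof q_le_half as Hq.
  pose proof L_pos as HL. pose proof k_ge_2 as Hk2.
  assert (Hf := ff_excess_bounds p k (dd alpha n) s ltac:(lra) ltac:(lia)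
                  ltac:(fold q; lra) ltac:(fold q; lra) ltac:(fold q; lra)).
  fold q in Hf.
  assert (Hsk : s ^ k <= s * eta2 ^ (k - 1)).
  { replace k with (Datatypes.S (k - 1)) at 1 by lia. simpl.
    apply Rmult_le_compat_l; [lra|]. apply pow_incr. lra. }
  assert (Hqk : 0 <= q ^ k) by (apply pow_le; lra).
  assert (He2k : 0 <= eta2 ^ (k - 1)) by (apply pow_le; lra).
  assert (Hrate : 2 * p * r / (1 - p) <= mu).
  { assert (2 * p * r / (1 - p) <= INR k * p * r / (1 - p)); [|lra].
    unfold Rdiv. apply Rmult_le_compat_r; [apply Rlt_le, Rinv_0_lt_compat; lra|].
    rewrite !Rmult_assoc. apply Rmult_le_compat_r; nra. }
  assert (Hpp : 0 < p / (1 - p)) by (apply Rdiv_lt_0_compat; lra).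
  assert (Hrm : 0 <= r * mm alpha n) by (rewrite mm_eq; apply Rmult_le_pos; nra).
  assert (Hnj : INR n * s = INR j) by (unfold s; field; lra).
  unfold excess. eapply Rle_trans.
  { apply Rmult_le_compat_l; [exact Hrm|].
    apply Rle_trans with (1 := proj2 Hf).
    apply Rmult_le_compat_l with (r := 2 * (p / (1 - p))) (r1 := s ^ k - q ^ k) (r2 := s * eta2 ^ (k - 1));
      lra. }
  rewrite mm_eq, <- Hnj.
  replace (r * (INR n * (alpha * L)) * (2 * (p / (1 - p)) * (s * eta2 ^ (k - 1))))
    with ((2 * p * r / (1 - p)) * (alpha * L * eta2 ^ (k - 1) * (INR n * s))) by (field; lra).
  replace (mu * alpha * L * eta2 ^ (k - 1) * (INR n * s))
    with (mu * (alpha * L * eta2 ^ (k - 1) * (INR n * s))) by ring.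
  apply Rmult_le_compat_r; [|exact Hrate].
  apply Rmult_le_pos; [apply Rmult_le_pos; nra | lra].
Qed.

(* Moderate deviations [j < mu0 n^alpha0]: the Gaussian decay of the
   binomial beats the linear growth of the weight. *)
Lemma Phi_moderate :
  INR j < mu0 * exp (alpha0 alpha k * L) -> Phi alpha r p k n j <= exp (- (2 * L)).
Proof.
  intros Hsmall. pose proof L_pos as HL. pose proof t0_bounds as [Ht0 Ht0mu].
  pose proof window_start as Hw. pose proof mean_sq as Hsq.
  assert (Hh : 0 < h) by apply exp_pos.
  assert (HE : 0 < exp (g * L)) by apply exp_pos.
  assert (HK : 0 <= K).
  { unfold K. apply Rdiv_le_0_compat; [|lra]. pose proof k_ge_2. repeat apply Rmult_le_pos; lra. }
  assert (Hslope : 2 * (K * L / h) <= t0 / (3 * mu0)).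
  { assert (E : t0 / (3 * mu0) - 2 * (K * L / h)
                = (lam * exp (g * L) - 6 * K * alpha * L ^ 2) / (3 * alpha * L * h))
      by (unfold t0; rewrite Hsq; field; split; lra).
    assert (0 <= (lam * exp (g * L) - 6 * K * alpha * L ^ 2) / (3 * alpha * L * h))
      by (apply Rdiv_le_0_compat; nra).
    lra. }
  assert (Hquad : 2 * L <= t0 ^ 2 / (6 * mu0)).
  { assert (E : t0 ^ 2 / (6 * mu0) - 2 * L
                = ((lam * exp (g * L)) ^ 2 - 12 * alpha ^ 2 * L ^ 3) / (6 * alpha ^ 2 * L ^ 2))
      by (unfold t0; rewrite Hsq; field; split; lra).
    assert (0 <= ((lam * exp (g * L)) ^ 2 - 12 * alpha ^ 2 * L ^ 3) / (6 * alpha ^ 2 * L ^ 2))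
      by (apply Rdiv_le_0_compat; nra).
    lra. }
  eapply Rle_trans; [apply Phi_le_exp_excess|]. apply exp_le_mono.
  pose proof (excess_moderate Hsmall) as Hex.
  pose proof (moderate_deviation_exponent mu0 t0 (INR j - mu0) (K * L / h) L
                Ht0 ltac:(lra) Ht0mu Hslope Hquad) as Hmod.
  replace (mu0 + (INR j - mu0)) with (INR j) in Hmod by ring.
  lra.
Qed.

(* Large deviations [j >= mu0 n^alpha0]: the binomial costs [n^(-alpha0 j)]
   while the weight gains at most [n^(mu alpha eta2^(k-1) j)]; the net rate
   is [c0 > 0]. *)
Lemma Phi_large :
  mu0 * exp (alpha0 alpha k * L) <= INR j -> Phi alpha r p k n j <= exp (- (2 * L)).
Proof.
  intros Hbig. pose proof L_pos as HL. destruct density_bounds as [Hj _].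
  assert (Hmu0 : 0 < mu0) by apply exp_pos.
  assert (Hc0 : 0 < c0) by nra.
  assert (Ha0 : 0 < alpha0 alpha k).
  { assert (0 <= alpha * mu * eta2 ^ (k - 1)); [|unfold c0 in Hc0; lra].
    apply Rmult_le_pos; [|apply pow_le; lra]. pose proof k_ge_2.
    apply Rmult_le_pos; [lra|]. apply Rlt_le, Rle_lt_trans with (2 := Hmu).
    apply Rdiv_le_0_compat; [|lra]. repeat apply Rmult_le_pos; lra. }
  assert (Hmu0j : mu0 <= INR j).
  { assert (1 <= exp (alpha0 alpha k * L)) by (pose proof (exp_ineq1_le (alpha0 alpha k * L)); nra).
    nra. }
  assert (Hcost : ln (mu0 / INR j) <= - (alpha0 alpha k * L)).
  { rewrite <- (ln_exp (- (alpha0 alpha k * L))). apply ln_le; [apply Rdiv_lt_0_compat; lra|].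
    rewrite exp_Ropp. apply Rmult_le_reg_r with (INR j * exp (alpha0 alpha k * L));
      [apply Rmult_lt_0_compat; [lra | apply exp_pos]|].
    replace (mu0 / INR j * (INR j * exp (alpha0 alpha k * L))) with (mu0 * exp (alpha0 alpha k * L))
      by (field; lra).
    replace (/ exp (alpha0 alpha k * L) * (INR j * exp (alpha0 alpha k * L))) with (INR j)
      by (field; apply Rgt_not_eq, exp_pos).
    exact Hbig. }
  eapply Rle_trans; [apply Phi_le_exp_excess|]. apply exp_le_mono.
  pose proof excess_large as Hex.
  assert (Hbin : INR j * ln (mu0 / INR j) <= INR j * - (alpha0 alpha k * L))
    by (apply Rmult_le_compat_l; lra).
  assert (Hnet : INR j * - (alpha0 alpha k * L) + mu * alpha * L * eta2 ^ (k - 1) * INR j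
                 = - (c0 * L * INR j)) by (unfold c0; ring).
  assert (Hc0mu0 : 4 <= c0 * mu0) by exact HL4.
  assert (Hc0j : 4 <= c0 * INR j) by nra.
  nra.
Qed.

Lemma Phi_window_bound : Phi alpha r p k n j <= exp (- (2 * ln (INR n))).
Proof.
  destruct (Rlt_le_dec (INR j) (mu0 * exp (alpha0 alpha k * L))) as [Hsmall | Hbig].
  - exact (Phi_moderate Hsmall).
  - exact (Phi_large Hbig).
Qed.
End OneTerm.

(* Both rates are positive; this is where [alpha0/alpha > mu eta2^(k-1)]
   and [(2k - 1) alpha > 1] enter. *)
Hypotheses (Hc0 : 0 < c0) (Hg : 0 < g).

(* The largeness conditions on [L = ln n] under which every term of the
   window is at most [n^-2]. *)
Let large_regime (L : R) : Prop :=
  1 <= alpha * L /\ lam <= alpha * L /\ 2 <= c0 * L /\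
  4 <= c0 * exp ((1 - alpha) * L) /\
  6 * K * alpha * L ^ 2 <= lam * exp (g * L) /\
  12 * alpha ^ 2 * L ^ 3 <= (lam * exp (g * L)) ^ 2.

Lemma large_regime_eventually : Rbar_locally p_infty large_regime.
Proof.
  pose proof k_ge_2 as Hk2.
  assert (Ha1 : 0 < 1 - alpha) by nra.
  assert (HK : 0 <= K).
  { unfold K. apply Rdiv_le_0_compat; [|lra]. repeat apply Rmult_le_pos; lra. }
  assert (Hcubic5 := eventually_cubic_le_exp g (6 * K * alpha / lam) Hg).
  assert (Hcubic6 := eventually_cubic_le_exp (2 * g) (12 * alpha ^ 2 / lam ^ 2) ltac:(lra)).
  unfold large_regime. repeat apply filter_and.
  - apply eventually_linear_ge. exact Ha.
  - apply eventually_linear_ge. exact Ha.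
  - apply eventually_linear_ge. exact Hc0.
  - apply (filter_imp (fun L => 4 / c0 <= (1 - alpha) * L));
      [|apply eventually_linear_ge; exact Ha1].
    intros L HL. pose proof (exp_ineq1_le ((1 - alpha) * L)).
    apply Rmult_le_compat_l with (r := c0) in HL; [|lra].
    replace (c0 * (4 / c0)) with 4 in HL by (field; lra). nra.
  - apply (filter_imp (fun L => 1 <= 1 * L /\ 6 * K * alpha / lam * L ^ 3 <= exp (g * L)));
      [|apply filter_and; [apply eventually_linear_ge; lra | exact Hcubic5]].
    intros L [HL1 HL]. apply Rmult_le_compat_l with (r := lam) in HL; [|lra].
    replace (lam * (6 * K * alpha / lam * L ^ 3)) with (6 * K * alpha * L ^ 3) in HL by (field; lra).
    assert (L ^ 2 <= L ^ 3) by (simpl; nra).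
    assert (0 <= 6 * K * alpha) by nra. nra.
  - apply (filter_imp (fun L => 12 * alpha ^ 2 / lam ^ 2 * L ^ 3 <= exp (2 * g * L)));
      [|exact Hcubic6].
    intros L HL.
    apply Rmult_le_compat_l with (r := lam ^ 2) in HL; [|apply pow_le; lra].
    replace (lam ^ 2 * (12 * alpha ^ 2 / lam ^ 2 * L ^ 3)) with (12 * alpha ^ 2 * L ^ 3) in HL
      by (field; lra).
    replace ((lam * exp (g * L)) ^ 2) with (lam ^ 2 * exp (2 * g * L)); [exact HL|].
    rewrite Rpow_mult_distr, exp_pow. do 2 f_equal. simpl. ring.
Qed.

(* Hence the whole window sum is at most [(n + 1) n^-2 <= 2/n]. *)
Lemma sum_Phi_le (n : nat) :
  1 <= INR n -> large_regime (ln (INR n)) ->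
  0 <= sum_Phi alpha r p lam eta2 k n <= 2 * / INR n.
Proof.
  intros Hn (HL1 & HL2 & HL3 & HL4 & HL5 & HL6).
  assert (Hd : 1 <= dd alpha n).
  { rewrite dd_exp. pose proof (exp_ineq1_le (alpha * ln (INR n))). lra. }
  set (B := exp (- (2 * ln (INR n)))).
  assert (HB : B = / INR n * / INR n).
  { unfold B. rewrite <- Rinv_mult, exp_Ropp. f_equal.
    replace (2 * ln (INR n)) with (INR 2 * ln (INR n)) by (simpl; ring).
    rewrite <- exp_pow, exp_ln by lra. simpl. ring. }
  set (term := fun i =>
    if Rle_dec (INR n * eta1 alpha lam k n) (INR i) then
      if Rle_dec (INR i) (INR n * eta2) then Phi alpha r p k n i else 0 else 0).
  assert (Hterm0 : forall i, 0 <= term i).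
  { intros i. unfold term. destruct (Rle_dec _ _); [|lra]. destruct (Rle_dec _ _); [|lra].
    apply Phi_nonneg. exact Hd. }
  assert (HtermB : forall i, (i <= n)%nat -> term i <= B).
  { intros i Hi. unfold term. assert (0 <= B) by (left; apply exp_pos).
    destruct (Rle_dec _ _) as [Hi1|]; [|lra]. destruct (Rle_dec _ _) as [Hi2|]; [|lra].
    apply Phi_window_bound; auto; lra. }
  unfold sum_Phi. fold term. split; [apply cond_pos_sum; exact Hterm0|].
  apply Rle_trans with (sum_f_R0 (fun _ => B) n); [apply sum_Rle; exact HtermB|].
  rewrite sum_cte, HB, S_INR.
  replace (/ INR n * / INR n * (INR n + 1)) with ((1 + / INR n) * / INR n) by (field; lra).
  apply Rmult_le_compat_r; [left; apply Rinv_0_lt_compat; lra|].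
  assert (/ INR n <= 1) by (rewrite <- Rinv_1; apply Rinv_le_contravar; lra). lra.
Qed.
End Asymptotics.

Theorem lemma4p7 (k : nat) (alpha r p lam eta2 eta3 mu : R) :
  (2 <= k)%nat -> 0 < alpha -> 0 < r -> 0 < p -> p < 1 ->
  (2 * INR k - 1) * alpha > 1 ->
  INR k * alpha <= 1 ->
  INR k >= tau p * ln (tau p) / (tau p - 1) ->
  r < r_cr p ->
  0 < lam ->
  0 < eta2 -> eta2 < eta3 -> eta3 < 1 ->
  alpha0 alpha k / alpha - mu * eta2 ^ (k - 1) > 0 ->
  mu > INR k * p * r / (1 - p) ->
  r * ln (1 - p) + eta3 > 0 ->
  Un_cv (fun n => sum_Phi alpha r p lam eta2 k n) 0.
Proof.
  intros Hk Ha Hr Hp Hp1 H2k Hka _ _ Hlam He2 He23 He3 Hal Hmu _.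
  assert (Hc0 : 0 < alpha0 alpha k - alpha * mu * eta2 ^ (k - 1)).
  { replace (alpha0 alpha k - alpha * mu * eta2 ^ (k - 1))
      with (alpha * (alpha0 alpha k / alpha - mu * eta2 ^ (k - 1))) by (field; lra).
    apply Rmult_lt_0_compat; lra. }
  assert (Hg : 0 < (INR k - 1) * alpha - (1 - alpha) / 2) by lra.
  (* since [ln n -> +oo], the large regime holds for [L = ln n] eventually in [n] *)
  assert (Hln : filterlim (fun n => ln (INR n)) eventually (Rbar_locally p_infty))
    by exact (filterlim_comp _ _ _ INR ln _ _ _ is_lim_seq_INR is_lim_ln_p).
  destruct (Hln _ (large_regime_eventually k alpha r p lam eta2 mu Hk Ha Hka Hr Hp Hp1 Hlam
                     He2 ltac:(lra) Hc0 Hg)) as [N HN].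
  apply is_lim_seq_Reals.
  apply is_lim_seq_le_le_loc with (u := fun _ => 0) (w := fun n => 2 * / INR n).
  - exists (Init.Nat.max 1 N). intros n Hn.
    assert (Hn1 : 1 <= INR n) by (replace 1 with (INR 1) by reflexivity; apply le_INR; lia).
    apply (sum_Phi_le k alpha r p lam eta2 mu Hk Ha Hka Hr Hp Hp1 Hlam He2 ltac:(lra) Hmu n Hn1).
    apply HN. lia.
  - apply is_lim_seq_const.
  - replace (Finite 0) with (Rbar_mult 2 (Rbar_inv p_infty)) by (simpl; f_equal; ring).
    apply is_lim_seq_scal_l, is_lim_seq_inv; [exact is_lim_seq_INR | discriminate].
Qed.
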